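(* Fix $T\ge0$. For $k\in\mathbb N_+$ let $\xi^k=\xi^{(a,k,T)}$. Then for all integers $\ell\ge k\ge1$, almost surely $\xi^\ell_t\ge\xi^k_t$ for all $t\in[0,T]$.
   Context: Let $\lambda>0$ and let $N$ be a Poisson process with intensity $\lambda$, arrival times $0<\sigma_1<\sigma_2<\cdots$, and natural filtration $\mathcal F_t=\sigma(N_s:s\le t)$. Let $F:[0,\infty)\to[0,\infty)$ be strictly increasing and strictly convex with $F(0)=0$. For $k\in\{0,1,\dots\}$ let $\mathcal A_k$ be the set of $(\mathcal F_t)$-adapted, integer-valued, nonnegative, non-increasing processes $\xi$ with $\xi_0=k$ whose values change only at arrival times of $N$, and $v(k,T)=\inf_{\xi\in\mathcal A_k}\mathbb E[\sum_{i:\sigma_i\le T}F(\xi_{\sigma_i-}-\xi_{\sigma_i})+F(\xi_T)]$. For $k\in\mathbb N_+$, $a(k,T)$ is the smallest minimizer over $a\in\{1,\dots,k\}$ of $v(k-a,T)+F(a)$, and $a(0,T)=0$. The inventory process $\xi^{(a,k,T)}$ is defined by $\xi^{(a,k,T)}_0=k$, constant between arrival times, and at each arrival time $\sigma_i\le T$: $\xi^{(a,k,T)}_{\sigma_i}=\xi^{(a,k,T)}_{\sigma_i-}-a(\xi^{(a,k,T)}_{\sigma_i-},T-\sigma_i)$. *)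

From HB Require Import structures.
From mathcomp Require Import all_boot all_order all_algebra.
From mathcomp Require Import all_classical all_reals all_analysis.
Set Implicit Arguments. Unset Strict Implicit. Unset Printing Implicit Defensive.
Import Order.TTheory GRing.Theory Num.Theory.
Local Open Scope classical_set_scope.
Local Open Scope ring_scope.

Section Defs.
Context {R : realType} {d : measure_display} {Omega : measurableType d}.

Definition poisson_pmf (mu : R) (n : nat) : R :=
  expR (- mu) * mu ^+ n / (n`!)%:R.

(* N is a Poisson process with intensity lam under P, with arrival times
   sigma (sigma 0 = 0 by convention, sigma i = i-th arrival time for i >= 1):
   - paths: 0 = sigma_0 < sigma_1 < sigma_2 < ... and N_t = n iff
     sigma_n <= t < sigma_{n+1} (so N is the counting process of the sigma_i);
   - each {N_t = n} is an event;
   - finite-dimensional laws: increments over consecutive intervals are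
     independent and Poisson(lam * length) distributed. *)
Definition poisson_process (P : probability Omega R) (lam : R)
    (N : R -> Omega -> nat) (sigma : nat -> Omega -> R) : Prop :=
  [/\ (forall w, sigma 0%N w = 0),
      (forall i w, sigma i w < sigma i.+1 w),
      (forall t w, 0 <= t -> sigma (N t w) w <= t < sigma (N t w).+1 w),
      (forall t (n : nat), measurable (N t @^-1` [set n])) &
      (forall (m : nat) (tt : nat -> R) (n : nat -> nat),
          0 <= tt 0%N -> (forall j, tt j <= tt j.+1) ->
          P [set w | forall j, (j < m)%N -> (N (tt j.+1) w - N (tt j) w)%N = n j]
          = (\prod_(j < m) poisson_pmf (lam * (tt j.+1 - tt j)) (n j))%:E)].

Definition nat_filtration (N : R -> Omega -> nat) (t : R) : set (set Omega) :=
  <<s [set A | exists s (n : nat), 0 <= s <= t /\ A = N s @^-1` [set n]] >>.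

(* the admissible class A_k: adapted, N-valued (hence integer-valued and
   nonnegative), non-increasing, xi_0 = k, and changing values only at
   arrival times (constant on each [sigma_i, sigma_{i+1})). *)
Definition admissible (N : R -> Omega -> nat) (sigma : nat -> Omega -> R)
    (k : nat) (xi : R -> Omega -> nat) : Prop :=
  [/\ (forall t (n : nat), 0 <= t -> nat_filtration N t (xi t @^-1` [set n])),
      (forall w, xi 0 w = k),
      (forall s t w, 0 <= s -> s <= t -> (xi t w <= xi s w)%N) &
      (forall i t w, sigma i w <= t < sigma i.+1 w -> xi t w = xi (sigma i w) w)].

(* cost of xi on [0,T]: sum over arrivals sigma_i <= T (i >= 1) of
   F(xi_{sigma_i -} - xi_{sigma_i}) plus F(xi_T); the left limit
   xi_{sigma_i -} is the value on [sigma_{i-1}, sigma_i). *)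
Definition cost (P : probability Omega R) (N : R -> Omega -> nat)
    (sigma : nat -> Omega -> R) (F : R -> R) (T : R) (xi : R -> Omega -> nat)
    : \bar R :=
  (\int[P]_w ((\sum_(1 <= i < (N T w).+1 | sigma i w <= T)
       F ((xi (sigma i.-1 w) w - xi (sigma i w) w)%N%:R)) + F (xi T w)%:R)%:E)%E.

Definition value (P : probability Omega R) (N : R -> Omega -> nat)
    (sigma : nat -> Omega -> R) (F : R -> R) (k : nat) (T : R) : \bar R :=
  ereal_inf [set cost P N sigma F T xi | xi in admissible N sigma k].

(* a(k,T): smallest minimiser over a in {1,...,k} of v(k-a,T) + F(a);
   a(0,T) = 0 (the sequence below is empty when k = 0). *)
Definition opt_sale (P : probability Omega R) (N : R -> Omega -> nat)
    (sigma : nat -> Omega -> R) (F : R -> R) (k : nat) (T : R) : nat :=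
  let c := fun a : nat => (value P N sigma F (k - a) T + (F a%:R)%:E)%E in
  let m := \big[Order.min/+oo%E]_(a <- iota 1 k) c a in
  head 0%N [seq a <- iota 1 k | c a == m].

Fixpoint inv_seq (P : probability Omega R) (N : R -> Omega -> nat)
    (sigma : nat -> Omega -> R) (F : R -> R) (k : nat) (T : R) (i : nat)
    (w : Omega) : nat :=
  match i with
  | 0%N => k
  | i'.+1 => let x := inv_seq P N sigma F k T i' w in
      if sigma i'.+1 w <= T
      then (x - opt_sale P N sigma F x (T - sigma i'.+1 w))%N else x
  end.

Definition inv_proc (P : probability Omega R) (N : R -> Omega -> nat)
    (sigma : nat -> Omega -> R) (F : R -> R) (k : nat) (T : R)
    (t : R) (w : Omega) : nat :=
  inv_seq P N sigma F k T (N t w) w.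

End Defs.

From HB Require Import structures.
From mathcomp Require Import all_boot all_order all_algebra.
From mathcomp Require Import all_classical all_reals all_analysis.
From mathcomp Require Import zify lra.
Import Order.TTheory GRing.Theory Num.Theory.
Local Open Scope classical_set_scope.
Local Open Scope ring_scope.

(* The sale a(x) chosen at inventory x is a minimiser of a |-> v(x - a) + F(a)
   over 1 <= a <= x, and only this optimality is used.  Strict convexity makes
   the increments F(a+1) - F(a) strictly increasing; comparing minimisers a at
   x+1 and b at x+2 with the competitors b-1 and a+1 then shows that the
   remaining inventory x - a(x) is nondecreasing in x.  (The minimisation is a
   real one because v is finite: never selling costs F(x).)  Both inventories
   are updated by this same map at the same arrival times, so k <= l is
   preserved along every path; the comparison holds for every outcome, not
   only almost surely. *)

Section SeqArgmin.
Context {disp : Order.disp_t} {T : orderType disp} {I : eqType}.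
Variables (x0 : T) (F : I -> T).

Lemma bigmin_seq_attained (s : seq I) :
  s != [::] -> {in s, forall i, (F i <= x0)%O} ->
  exists2 i, i \in s & \big[Order.min/x0]_(j <- s) F j = F i.
Proof.
elim: s => [//|i [|j s] IH] _ Fx0.
  by exists i; rewrite ?mem_head // big_cons big_nil min_l // Fx0 ?mem_head.
rewrite big_cons.
have [k ks ->] : exists2 k, k \in j :: s &
    \big[Order.min/x0]_(j <- j :: s) F j = F k.
  by apply: IH => // m ms; apply: Fx0; rewrite in_cons ms orbT.
rewrite minEle; case: ifP => _; first by exists i; rewrite ?mem_head.
by exists k; rewrite // in_cons ks orbT.
Qed.

Lemma head_argmin_seq (i0 : I) (s : seq I) :
  s != [::] -> {in s, forall i, (F i <= x0)%O} ->
  let a := head i0 [seq i <- s | F i == \big[Order.min/x0]_(j <- s) F j] in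
  a \in s /\ {in s, forall i, (F a <= F i)%O}.
Proof.
move=> s0 Fx0 a; have [m ms Fm] := bigmin_seq_attained _ s0 Fx0.
have : a \in [seq i <- s | F i == \big[Order.min/x0]_(j <- s) F j].
  have : m \in [seq i <- s | F i == \big[Order.min/x0]_(j <- s) F j].
    by rewrite mem_filter Fm eqxx.
  by rewrite /a; case: [seq _ <- _ | _] => [|b t] //= _; rewrite mem_head.
rewrite mem_filter => /andP [/eqP Fa sa]; split=> // i si.
by rewrite Fa; exact: ge_bigmin_seq.
Qed.

End SeqArgmin.

Section ConvexOnNaturals.
Context {R : realFieldType}.
Variable F : R -> R.
Hypothesis F_strict_convex : forall x y t, 0 <= x -> 0 <= y -> x != y ->
  0 < t < 1 -> F (t * x + (1 - t) * y) < t * F x + (1 - t) * F y.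

Lemma convex_increment_lt_succ (r : nat) :
  F r.+1%:R - F r%:R < F r.+2%:R - F r.+1%:R.
Proof.
have r_neq : r%:R != r.+2%:R :> R by rewrite eqr_nat; lia.
have half : 0 < (2^-1 : R) < 1 by apply/andP; split; lra.
have := F_strict_convex _ _ _ (ler0n _ r) (ler0n _ r.+2) r_neq half.
have -> : 2^-1 * r%:R + (1 - 2^-1) * r.+2%:R = r.+1%:R :> R.
  by rewrite -[r.+2]addn2 -[r.+1]addn1 !natrD; lra.
lra.
Qed.

Lemma convex_increment_lt (p q : nat) : (p < q)%N ->
  F p.+1%:R - F p%:R < F q.+1%:R - F q%:R.
Proof.
exact: (@homo_ltn _ (fun r => F r.+1%:R - F r%:R) _ lt_trans
  convex_increment_lt_succ).
Qed.

End ConvexOnNaturals.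

Section OptimalSale.
Context {R : realDomainType}.
Variables (g : nat -> R) (F : R -> R).

Definition is_opt_sale (x a : nat) :=
  (1 <= a <= x)%N /\
  forall b, (1 <= b <= x)%N -> g (x - a) + F a%:R <= g (x - b) + F b%:R.

Hypothesis F_increment_lt : forall p q : nat, (p < q)%N ->
  F p.+1%:R - F p%:R < F q.+1%:R - F q%:R.

Lemma opt_sale_remaining_succ (x a b : nat) :
  is_opt_sale x.+1 a -> is_opt_sale x.+2 b -> (x.+1 - a <= x.+2 - b)%N.
Proof.
move=> [/andP [a_ge1 a_le] a_opt] [/andP [b_ge1 b_le] b_opt].
rewrite leqNgt; apply/negP => lt_rem.
have lt_ab : (a < b.-1)%N by lia.
have := a_opt b.-1 ltac:(lia); have := b_opt a.+1 ltac:(lia).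
have -> : (x.+1 - b.-1 = x.+2 - b)%N by lia.
have -> : (x.+2 - a.+1 = x.+1 - a)%N by lia.
by have := F_increment_lt _ _ lt_ab; rewrite prednK //; lra.
Qed.

Lemma opt_sale_remaining_mono (a : nat -> nat) :
  (forall x, (1 <= x)%N -> is_opt_sale x (a x)) ->
  {homo (fun x => x - a x)%N : x y / (x <= y)%N}.
Proof.
move=> a_opt; apply: homo_leq => [//|y x z|[|x]]; first exact: leq_trans.
  by rewrite sub0n.
by apply: opt_sale_remaining_succ; apply: a_opt.
Qed.

End OptimalSale.

Section ValueFunction.
Context {R : realType} {d : measure_display} {Omega : measurableType d}.
Variables (P : probability Omega R) (N : R -> Omega -> nat)
  (sigma : nat -> Omega -> R) (F : R -> R).
Hypotheses (F0 : F 0 = 0) (F_ge0 : forall x, 0 <= x -> 0 <= F x).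
Hypothesis F_strict_convex : forall x y t, 0 <= x -> 0 <= y -> x != y ->
  0 < t < 1 -> F (t * x + (1 - t) * y) < t * F x + (1 - t) * F y.

Lemma admissible_cst (k : nat) : admissible N sigma k (fun _ => cst k).
Proof.
rewrite /admissible; split=> // t n _.
rewrite /nat_filtration preimage_cst; case: ifP => _.
  rewrite -[X in _ X](setD0 [set: Omega]); apply: sigma_algebraCD.
  exact: sigma_algebra0.
exact: sigma_algebra0.
Qed.

Lemma cost_ge0 (T : R) (xi : R -> Omega -> nat) :
  (0 <= cost P N sigma F T xi)%E.
Proof.
apply: integral_ge0 => w _; rewrite lee_fin addr_ge0 ?F_ge0 //.
by apply: sumr_ge0 => i _; exact: F_ge0.
Qed.

Lemma cost_cst (T : R) (k : nat) :
  cost P N sigma F T (fun _ => cst k) = (F k%:R)%:E.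
Proof.
rewrite /cost (eq_integral (fun=> (F k%:R)%:E)); last first.
  by move=> w _; rewrite subnn F0 big1 ?add0r.
rewrite integral_cst // -[RHS]mule1; congr (_ * _)%E; exact: probability_setT.
Qed.

Lemma value_fin_num (k : nat) (T : R) : value P N sigma F k T \is a fin_num.
Proof.
rewrite ge0_fin_numE; last first.
  by apply: le_ereal_inf_tmp => _ [xi _ <-]; exact: cost_ge0.
apply: (@le_lt_trans _ _ (F k%:R)%:E); last exact: ltry.
apply: ereal_inf_lbound.
by exists (fun _ => cst k); [exact: admissible_cst | exact: cost_cst].
Qed.

Lemma opt_sale_optimal (x : nat) (T : R) : (1 <= x)%N ->
  is_opt_sale (fun j => fine (value P N sigma F j T)) F x
    (opt_sale P N sigma F x T).
Proof.
move=> x_ge1.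
pose c a := fine (value P N sigma F (x - a)%N T) + F a%:R.
have cE a : (value P N sigma F (x - a) T + (F a%:R)%:E)%E = (c a)%:E.
  by rewrite EFinD fineK ?value_fin_num.
have -> : opt_sale P N sigma F x T = head 0%N [seq a <- iota 1 x |
    (c a)%:E == \big[Order.min/+oo%E]_(b <- iota 1 x) (c b)%:E].
  rewrite /opt_sale; congr head; apply: eq_filter => a; rewrite cE.
  by congr (_ == _); apply: eq_bigr => b _; exact: cE.
have [|a _|] := @head_argmin_seq _ _ _ +oo%E (fun a => (c a)%:E) 0%N (iota 1 x).
- by rewrite -size_eq0 size_iota -lt0n.
- exact: leey.
rewrite mem_iota add1n ltnS => sale_range sale_min; split=> // b b_range.
by rewrite -lee_fin; apply: sale_min; rewrite mem_iota add1n ltnS.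
Qed.

Lemma inv_seq_mono (T : R) (k l i : nat) (w : Omega) : (k <= l)%N ->
  (inv_seq P N sigma F k T i w <= inv_seq P N sigma F l T i w)%N.
Proof.
move=> le_kl; elim: i => [//|i IH] /=; case: ifP => // _.
set s := (T - sigma i.+1 w).
have a_opt x : (1 <= x)%N ->
    is_opt_sale (fun j => fine (value P N sigma F j s)) F x
      (opt_sale P N sigma F x s).
  exact: opt_sale_optimal.
have incr_lt := convex_increment_lt _ F_strict_convex.
exact: (opt_sale_remaining_mono _ _ incr_lt _ a_opt _ _ IH).
Qed.

End ValueFunction.

Theorem lemma2p5 (R : realType) (d : measure_display) (Omega : measurableType d)
    (P : probability Omega R) (lam : R) (N : R -> Omega -> nat)
    (sigma : nat -> Omega -> R) (F : R -> R)
    (hlam : 0 < lam)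
    (hN : poisson_process P lam N sigma)
    (hF0 : F 0 = 0)
    (hFpos : forall x, 0 <= x -> 0 <= F x)
    (hFinc : forall x y, 0 <= x -> x < y -> F x < F y)
    (hFconv : forall x y t, 0 <= x -> 0 <= y -> x != y -> 0 < t < 1 ->
        F (t * x + (1 - t) * y) < t * F x + (1 - t) * F y)
    (T : R) (hT : 0 <= T) (k l : nat) (hk : (1 <= k)%N) (hkl : (k <= l)%N) :
  {ae P, forall w, forall t, 0 <= t <= T ->
     (inv_proc P N sigma F k T t w <= inv_proc P N sigma F l T t w)%N}.
Proof.
apply: aeW => w t _.
exact: inv_seq_mono hF0 hFpos hFconv T k l (N t w) w hkl.
Qed.
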